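(* Let $d\in[n]$, let every $v_j$ be $d$-self-bounding, fix $\mathbf s$, rename bidders so that $v_1(\mathbf s)\ge\cdots\ge v_n(\mathbf s)>0$, and let $k=\max\{i:v_i(\mathbf s)>v_1(\mathbf s)/2\}$. For each $i\in[n]$ define $$A_i=\frac{\log_2^\dagger\big(v_1(\mathbf s)/\underline v_1^{(i)}(\mathbf s)\big)}{k+1}+\sum_{j=1}^k\frac{\log_2^\dagger\big(v_j(\mathbf s)/\underline v_j^{(i)}(\mathbf s)\big)}{j(j+1)}.$$ Then $\sum_{i=1}^nA_i\le 2d$.
   Context: Signals $s_i\in S_i\subseteq\mathbb R$, $\mathbf S=S_1\times\cdots\times S_n$, valuations $v_j:\mathbf S\to\mathbb R_{>0}$. Lower estimates: $\underline v_j^{(i)}(\mathbf s)=\inf_{o_i\in S_i}v_j(o_i,\mathbf s_{-i})$. $v$ is $d$-self-bounding if $\sum_{i=1}^n(v(\mathbf s)-\inf_{o_i}v(o_i,\mathbf s_{-i}))\le d\,v(\mathbf s)$ for all $\mathbf s$. $\log_2^\dagger(\alpha)=\max(0,\min(1,\log_2\alpha))$, with $a/0=\infty$, $\log_2\infty=\infty$. *)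

From mathcomp Require Import all_boot all_order all_algebra.
From mathcomp Require Import all_classical all_reals all_analysis.
Set Implicit Arguments. Unset Strict Implicit. Unset Printing Implicit Defensive.
Import Order.TTheory GRing.Theory Num.Theory.
Local Open Scope classical_set_scope.
Local Open Scope ring_scope.

Section Defs.
Variable R : realType.

Definition upd n (s : 'I_n -> R) (i : 'I_n) (o : R) : 'I_n -> R :=
  fun j => if j == i then o else s j.

Definition lower_est n (S : 'I_n -> set R) (v : ('I_n -> R) -> R)
  (i : 'I_n) (s : 'I_n -> R) : R :=
  inf [set v (upd s i o) | o in S i].

Definition self_bounding n (S : 'I_n -> set R) (v : ('I_n -> R) -> R) (d : R) :=
  forall s : 'I_n -> R, (forall i, S i (s i)) ->
    \sum_(i < n) (v s - lower_est S v i s) <= d * v s.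

Definition log2 (x : R) : R := ln x / ln 2.

(* log2^dagger (a / b), with a / 0 = +oo and log2 +oo = +oo  (a > 0, b >= 0) *)
Definition log2dag_ratio (a b : R) : R :=
  if b == 0 then 1 else Num.max 0 (Num.min 1 (log2 (a / b))).

End Defs.

(* Each bidder's row of log-ratios is summable on its own: by concavity of ln,
   log2^dagger(v / u) <= 2 (v - u) / v whenever 0 <= u <= v, so d-self-bounding
   gives sum_i log2^dagger(v_j(s) / lower_j^(i)(s)) <= 2d for every j.  A_i mixes
   these rows with weights 1/(k+1) and 1/(j(j+1)) for j <= k, which telescope to
   at most 1, so sum_i A_i <= 2d. *)

From mathcomp Require Import all_boot all_order all_algebra.
From mathcomp Require Import all_classical all_reals all_analysis.
From mathcomp Require Import ring lra.
Import Order.TTheory GRing.Theory Num.Theory.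
Local Open Scope classical_set_scope.
Local Open Scope ring_scope.

Section Telescoping.
Variable R : numFieldType.

Lemma sum_inv_consecutive_prod (n k : nat) :
  \sum_(j < n | (j < k)%N) (((j.+1 * j.+2)%N)%:R : R)^-1
   = 1 - ((minn n k).+1%:R)^-1.
Proof.
elim: n => [|n IH]; first by rewrite big_ord0 min0n invr1 subrr.
rewrite big_mkcond big_ord_recr /= -big_mkcond IH.
case: (ltnP n k) => [ltnk|lekn]; last first.
  by rewrite (minn_idPr (leqW lekn)) addr0.
rewrite (minn_idPl ltnk) natrM -[n.+2]addn1 natrD.
have n1_gt0 : 0 < n.+1%:R :> R by rewrite ltr0Sn.
by field; rewrite !gt_eqF // ltr_wpDr.
Qed.

(* The weights sum to at most 1 for every k and every distinguished row [j0],
   so neither the ordering of the bidders, nor the choice of k, nor d <= n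
   enters the proof of the theorem. *)
Lemma sum_weighted_rows_le n (a : 'I_n -> 'I_n -> R) (c : R) (k : nat)
    (j0 : 'I_n) :
  0 <= c -> (forall j, \sum_(i < n) a j i <= c) ->
  \sum_(i < n) (a j0 i / k.+1%:R
     + \sum_(j < n | (j < k)%N) a j i / ((j.+1 * j.+2)%N)%:R) <= c.
Proof.
move=> c_ge0 row_le.
have scale_row (j : 'I_n) (w : R) : 0 <= w ->
    \sum_(i < n) a j i * w <= c * w.
  by move=> w_ge0; rewrite -mulr_suml ler_wpM2r.
rewrite big_split /= exchange_big /=.
apply: (@le_trans _ _ (c / k.+1%:R
    + \sum_(j < n | (j < k)%N) c / ((j.+1 * j.+2)%N)%:R)).
  apply: lerD; first exact: scale_row.
  by apply: ler_sum => j _; apply: scale_row.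
rewrite -mulr_sumr -mulrDr sum_inv_consecutive_prod.
rewrite -[leRHS]mulr1 ler_wpM2l // addrCA -[leRHS]addr0 lerD2l subr_le0.
by rewrite lef_pV2 ?posrE ?ltr0Sn // ler_nat ltnS geq_minr.
Qed.

End Telescoping.

Section LogRatio.
Variable R : realType.

Lemma ln_ge_chord (x : R) : 2^-1 <= x -> x <= 1 ->
  - (2 * (1 - x) * ln 2) <= ln x.
Proof.
move=> x_ge x_le1.
have t_ge0 : 0 <= 2 * (1 - x) by rewrite mulr_ge0 // subr_ge0.
have t_le1 : 2 * (1 - x) <= 1.
  have half2 : 2 * 2^-1 = 1 :> R by rewrite mulfV.
  nra.
have := @concave_ln R (Itv01 t_ge0 t_le1) (2^-1) 1 ltac:(by []) ltr01.
rewrite !convRE /= ln1 mulr0 addr0 lnV ?posrE // mulrN -mulNr.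
suff -> : 2 * (1 - x) / 2 + unstable.onem (2 * (1 - x)) * 1 = x by [].
by rewrite /unstable.onem mulr1 mulrAC mulfV ?mul1r //; ring.
Qed.

Lemma log2dag_ratio_le (v u : R) : 0 < v -> 0 <= u -> u <= v ->
  log2dag_ratio v u <= 2 * (v - u) / v.
Proof.
move=> v_gt0 u_ge0 u_le_v; rewrite /log2dag_ratio.
have bound_ge0 : 0 <= 2 * (v - u) / v.
  by rewrite divr_ge0 ?mulr_ge0 ?subr_ge0 // ltW.
have [->|u_neq0] := eqVneq u 0; first by rewrite subr0 mulfK ?gt_eqF // ler1n.
have u_gt0 : 0 < u by rewrite lt_neqAle eq_sym u_neq0.
rewrite ge_max bound_ge0 /= ge_min; apply/orP.
have [u_le_half|half_lt_u] := leP u (v / 2).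
  left; rewrite ler_pdivlMr // mul1r.
  have : 2 * u <= v by rewrite mulrC -ler_pdivlMr.
  lra.
right; rewrite /log2 ler_pdivrMr ?ln_gt0 ?ltr1n //.
have := @ln_ge_chord (u / v).
rewrite ler_pdivlMr // mulrC ltW // ler_pdivrMr // mul1r => /(_ isT u_le_v).
rewrite -[v / u]invf_div lnV ?posrE ?divr_gt0 //.
suff -> : 2 * (1 - u / v) = 2 * (v - u) / v by lra.
by rewrite -mulrA mulrBl mulfV ?gt_eqF.
Qed.

Variables (n : nat) (S : 'I_n -> set R) (w : ('I_n -> R) -> R) (s : 'I_n -> R).
Hypothesis w_gt0 : forall t : 'I_n -> R, (forall i, S i (t i)) -> 0 < w t.
Hypothesis s_in : forall i, S i (s i).

Lemma upd_in i o : S i o -> forall j, S j (upd s i o j).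
Proof. by move=> So j; rewrite /upd; case: eqP => [->|]. Qed.

Lemma upd_id i : upd s i (s i) = s.
Proof. by apply: funext => j; rewrite /upd; case: eqP => [->|]. Qed.

Lemma lower_est_ge0 i : 0 <= lower_est S w i s.
Proof.
apply: lb_le_inf; first by exists (w s), (s i); rewrite ?upd_id.
by move=> y [x Sx <-]; apply/ltW/w_gt0/upd_in.
Qed.

Lemma lower_est_le i : lower_est S w i s <= w s.
Proof.
apply: ge_inf; first by exists 0 => y [x Sx <-]; apply/ltW/w_gt0/upd_in.
by exists (s i); rewrite ?upd_id.
Qed.

Lemma sum_log2dag_ratio_le (d : R) : self_bounding S w d ->
  \sum_(i < n) log2dag_ratio (w s) (lower_est S w i s) <= 2 * d.
Proof.
move=> w_sb; have ws_gt0 := w_gt0 _ s_in.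
apply: (@le_trans _ _ (\sum_(i < n) (w s - lower_est S w i s) * (2 / w s))).
  apply: ler_sum => i _.
  by rewrite mulrA [_ * 2]mulrC log2dag_ratio_le ?lower_est_ge0 ?lower_est_le.
rewrite -mulr_suml; apply: (@le_trans _ _ (d * w s * (2 / w s))).
  by rewrite ler_wpM2r ?w_sb // divr_ge0 // ltW.
by rewrite -mulrA [w s * _]mulrCA mulfV ?gt_eqF // mulr1 mulrC.
Qed.

End LogRatio.

Theorem mainTheorem11 (R : realType) (n : nat) (hn : (0 < n)%N) (d : nat)
  (S : 'I_n -> set R) (v : 'I_n -> ('I_n -> R) -> R) (s : 'I_n -> R)
  (hd : (1 <= d <= n)%N)
  (hpos : forall j (t : 'I_n -> R), (forall i, S i (t i)) -> 0 < v j t)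
  (hsb : forall j, self_bounding S (v j) d%:R)
  (hs : forall i, S i (s i))
  (hsorted : forall j1 j2 : 'I_n, (j1 <= j2)%N -> v j2 s <= v j1 s) :
  let v1 := v (Ordinal hn) s in
  let k : nat := \max_(i < n | v1 / 2 < v i s) (i : nat).+1 in
  let A := fun i : 'I_n =>
    log2dag_ratio v1 (lower_est S (v (Ordinal hn)) i s) / (k.+1)%:R
    + \sum_(j < n | (j < k)%N)
        log2dag_ratio (v j s) (lower_est S (v j) i s) / ((j.+1 * j.+2)%N)%:R in
  \sum_(i < n) A i <= 2 * d%:R.
Proof.
apply: sum_weighted_rows_le; first by rewrite mulr_ge0.
by move=> j; exact: (@sum_log2dag_ratio_le R n S (v j) s (hpos j) hs _ (hsb j)).
Qed.
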